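(* Let $p$ be a prime, $k \ge 1$ an integer, $q = p^k$, and $n = q^2 + q + 1$. Let $P$ be the set of points of the projective plane over the finite field $\mathbb{F}_q$ (the one-dimensional subspaces of $\mathbb{F}_q^3$; $|P| = n$), and let $L_1, \dots, L_n \subseteq P$ be its lines (for each nonzero $u \in \mathbb{F}_q^3$ up to scalar, the line $\{[v] \in P : u_1v_1 + u_2v_2 + u_3v_3 = 0\}$), each identified with its set of points. Identify the $n$ partitions with the points of $P$. Let $G = (V, E)$ be a finite graph and let $\psi : V \to \{L_1, \dots, L_n\}$ be any map. An FPP partition of $G$ is an assignment of each edge $\{u, v\} \in E$ to a partition (point) in $\psi(u) \cap \psi(v)$ (this intersection is a single point if $\psi(u) \neq \psi(v)$, and is the whole line $\psi(u)$ if $\psi(u) = \psi(v)$). For each point $x \in P$ let $E_x$ be the set of edges assigned to $x$, and let $RF = \frac{\sum_{x \in P} |V(E_x)|}{|V|}$, where $V(E_x)$ is the set of vertices incident to at least one edge of $E_x$. Then $RF \le q + 1$, and $\sqrt{n} \le q + 1 \le \sqrt{n} + 1$; in particular $RF \le \sqrt{n} + 1$.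
   Context: Every line of the projective plane over $\mathbb{F}_q$ contains exactly $q+1$ points, and any two distinct lines meet in exactly one point. *)

From HB Require Import structures.
From mathcomp Require Import all_boot all_order all_algebra all_field.
Set Implicit Arguments. Unset Strict Implicit. Unset Printing Implicit Defensive.
Import Order.TTheory GRing.Theory Num.Theory.
Local Open Scope ring_scope.

(* Projective plane PG(2, F) over a finite field F.
   A point [v] (v <> 0) is represented by the set of vectors of its
   one-dimensional subspace {a v | a in F}. *)
Section PG.
Variable F : finFieldType.

Definition pspan (v : 'rV[F]_3) : {set 'rV[F]_3} := [set a *: v | a : F].

Definition points : {set {set 'rV[F]_3}} :=
  [set pspan v | v in [set w : 'rV[F]_3 | w != 0]].

Definition dotp (u v : 'rV[F]_3) : F := \sum_(i < 3) u 0 i * v 0 i.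

Definition pline (u : 'rV[F]_3) : {set {set 'rV[F]_3}} :=
  [set x in points | [forall v in x, dotp u v == 0]].

Definition lines : {set {set {set 'rV[F]_3}}} :=
  [set pline u | u in [set w : 'rV[F]_3 | w != 0]].
End PG.

From HB Require Import structures.
From mathcomp Require Import all_boot all_order all_algebra all_field.
From mathcomp Require Import zify.
Set Implicit Arguments. Unset Strict Implicit. Unset Printing Implicit Defensive.
Import Order.TTheory GRing.Theory Num.Theory.
Local Open Scope ring_scope.

(* A vertex v can only be counted in V(E_x) when some edge at v is assigned
   to x, and then x lies on the line psi v.  Double counting vertex-point
   incidences therefore bounds the numerator of RF by the sum of |psi v|,
   i.e. by |V| (q + 1), because a line has at most q + 1 points: the q - 1
   nonzero vectors of each of its points are disjoint nonzero vectors of the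
   two-dimensional kernel of a linear form, so |L| (q - 1) <= q^2 - 1.
   The bounds on sqrt n just say q^2 <= n <= (q + 1)^2. *)

Lemma sum_card_incidence (I T : finType) (A : {pred I}) (S : I -> {set T}) :
  (\sum_(i in A) #|S i| = \sum_t #|[set i in A | t \in S i]|)%N.
Proof.
under eq_bigr do rewrite -sum1_card.
rewrite (exchange_big_dep predT) //=.
by apply: eq_bigr => t _; rewrite -sum1_card; apply: eq_bigl => i; rewrite inE.
Qed.

Section ProjectivePlane.
Variable F : finFieldType.
Implicit Types (u v w : 'rV[F]_3) (x : {set 'rV[F]_3}).

Lemma dotpBr u v w : dotp u (v - w) = dotp u v - dotp u w.
Proof. by rewrite /dotp -sumrB; apply: eq_bigr => i _; rewrite !mxE mulrBr. Qed.

Lemma pspan_scale (a : F) v : a != 0 -> pspan (a *: v) = pspan v.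
Proof.
move=> a0; apply/setP=> w; apply/imsetP/imsetP => [[b _ ->]|[b _ ->]].
  by exists (b * a) => //; rewrite scalerA.
by exists (b / a) => //; rewrite scalerA mulfVK.
Qed.

Lemma pspan_of_mem v w : w \in pspan v -> w != 0 -> pspan w = pspan v.
Proof.
case/imsetP=> a _ -> nz; apply: pspan_scale.
by apply: contraNneq nz => ->; rewrite scale0r.
Qed.

Lemma card_pspanD0 v : v != 0 -> #|pspan v :\ 0| = #|F|.-1.
Proof.
move=> v0; have scale_inj : injective (fun a : F => a *: v).
  move=> a b /eqP; rewrite -subr_eq0 -scalerBl scaler_eq0 (negbTE v0) orbF.
  by rewrite subr_eq0 => /eqP.
have v00 : 0 \in pspan v by apply/imsetP; exists 0; rewrite ?scale0r.
by have := cardsD1 0 (pspan v); rewrite v00 card_imset // add1n => ->.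
Qed.

Definition dotp_ker u : {set 'rV[F]_3} := [set v | dotp u v == 0].

Lemma card_dotp_ker u : u != 0 -> (#|dotp_ker u| <= #|F| ^ 2)%N.
Proof.
move=> u0; have [k uk] : exists k, u 0 k != 0.
  apply/existsP; apply: contraNT u0 => /existsPn u0.
  by apply/eqP/rowP => i; rewrite mxE; apply/eqP/negbNE.
(* Since [u 0 k != 0], a kernel vector is determined by its other two coordinates. *)
pose others v := (v 0 (lift k 0), v 0 (lift k 1)).
suff others_inj : {in dotp_ker u &, injective others}.
  by rewrite -(card_in_imset others_inj) (leq_trans (max_card _)) ?card_prod.
move=> v w; rewrite !inE => /eqP v0 /eqP w0 [e0 e1].
apply/eqP; rewrite -subr_eq0; apply/eqP/rowP => i; rewrite !mxE.
have off_k j : v 0 (lift k j) - w 0 (lift k j) = 0.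
  have [->|->] : j = 0 \/ j = 1.
    by case: j => [[|[|//]] ?]; [left | right]; apply: val_inj.
  - by rewrite e0 subrr.
  - by rewrite e1 subrr.
case: (unliftP k i) => [j ->|->]; first exact: off_k.
have : dotp u (v - w) = u 0 k * (v 0 k - w 0 k).
  rewrite /dotp (bigD1 k) //= big1 ?addr0 ?mxE // => i' ik.
  by case: (unliftP k i') ik => [j ->|->]; rewrite ?eqxx // !mxE off_k mulr0.
rewrite dotpBr v0 w0 subrr => /esym/eqP.
by rewrite mulf_eq0 (negbTE uk) => /eqP.
Qed.

Lemma point_eq_pspan x w : x \in points F -> w \in x -> w != 0 -> x = pspan w.
Proof. by case/imsetP=> v _ -> wx w0; rewrite (pspan_of_mem wx w0). Qed.

Lemma card_pointD0 x : x \in points F -> #|x :\ 0| = #|F|.-1.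
Proof. by case/imsetP=> v; rewrite inE => v0 ->; apply: card_pspanD0. Qed.

Lemma pline_points u x : x \in pline u -> x \in points F.
Proof. by rewrite inE => /andP[]. Qed.

Lemma pline_sub_ker u x : x \in pline u -> x \subset dotp_ker u.
Proof.
rewrite inE => /andP[_ /forall_inP ux]; apply/subsetP => v xv.
by rewrite inE ux.
Qed.

Lemma card_pline u : u != 0 -> (#|pline u| <= #|F|.+1)%N.
Proof.
move=> u0; set K := dotp_ker u.
have incidence_le1 w :
    (#|[set x in pline u | w \in x :\ 0%R]| <= (w \in K :\ 0%R))%N.
  have [_ | nKw] := boolP (w \in K :\ 0).
    apply/card_le1_eqP => x y /setIdP[/pline_points xP /setD1P[w0 wx]].
    move=> /setIdP[/pline_points yP /setD1P[_ wy]].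
    by rewrite (point_eq_pspan xP wx w0) (point_eq_pspan yP wy w0).
  rewrite leqn0 cards_eq0; apply/eqP/setP => x; rewrite in_set0.
  apply: contraNF nKw => /setIdP[xL /setD1P[w0 wx]].
  by rewrite in_setD1 w0 (subsetP (pline_sub_ker xL)).
have count_incidences : (#|pline u| * #|F|.-1 <= #|K :\ 0%R|)%N.
  rewrite -sum_nat_const (eq_bigr (fun x => #|x :\ 0%R|)); last first.
    by move=> x /pline_points/card_pointD0.
  rewrite sum_card_incidence -sum1_card [X in (_ <= X)%N]big_mkcond /=.
  by apply: leq_sum => w _; apply: incidence_le1.
have K0 : 0 \in K by rewrite inE /dotp big1 // => i _; rewrite mxE mulr0.
have ker_lt : (#|K :\ 0%R| < #|F| ^ 2)%N.
  by move: (card_dotp_ker u0); rewrite (cardsD1 0 K) K0.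
have F_gt1 : (1 < #|F|)%N := card_finNzRing_gt1 F.
rewrite -(leq_pmul2r (_ : 0 < #|F|.-1)%N); last by lia.
by apply: leq_trans count_incidences _; nia.
Qed.

Lemma card_line L : L \in lines F -> (#|L| <= #|F|.+1)%N.
Proof. by case/imsetP=> u; rewrite inE => u0 ->; apply: card_pline. Qed.

End ProjectivePlane.

Section EdgeLabelling.
Variables (V I : finType) (E : {set {set V}}) (psi : V -> {set I}) (f : {set V} -> I).
Hypothesis f_incident : forall e, e \in E -> forall v, v \in e -> f e \in psi v.

Definition class_vertices x := \bigcup_(e in [set e in E | f e == x]) e.

Lemma sum_card_class_vertices (X : {pred I}) :
  (\sum_(x in X) #|class_vertices x| <= \sum_v #|psi v|)%N.
Proof.
rewrite sum_card_incidence; apply: leq_sum => v _.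
apply/subset_leq_card/subsetP => x /setIdP[_ /bigcupP[e /setIdP[eE /eqP <-] ve]].
exact: f_incident.
Qed.

End EdgeLabelling.

Lemma ler_natr_div (R : numFieldType) (a b c : nat) :
  (a <= b * c)%N -> a%:R / b%:R <= c%:R :> R.
Proof.
have [-> _ | b_gt0 abc] := posnP b; first by rewrite invr0 mulr0 ler0n.
by rewrite ler_pdivrMr ?ltr0n // -natrM ler_nat mulnC.
Qed.

Lemma sqrtr_natX2 (R : rcfType) (a : nat) : Num.sqrt (a ^ 2)%:R = a%:R :> R.
Proof. by rewrite natrX sqrtr_sqr ger0_norm. Qed.

Lemma ler_sqrtr_nat (R : rcfType) (m a : nat) :
  (m <= a ^ 2)%N -> Num.sqrt m%:R <= a%:R :> R.
Proof. by move=> le_ma; rewrite -(sqrtr_natX2 _ a) ler_sqrt ?ler0n // ler_nat. Qed.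

Lemma ler_nat_sqrtr (R : rcfType) (m a : nat) :
  (a ^ 2 <= m)%N -> a%:R <= Num.sqrt m%:R :> R.
Proof. by move=> le_am; rewrite -(sqrtr_natX2 _ a) ler_sqrt ?ler0n // ler_nat. Qed.

Theorem theorem4 (p k : nat) (F : finFieldType) (R : rcfType)
  (V : finType) (E : {set {set V}})
  (psi : V -> {set {set 'rV[F]_3}}) (f : {set V} -> {set 'rV[F]_3}) :
  prime p -> (0 < k)%N -> #|F| = (p ^ k)%N ->
  (forall e, e \in E -> #|e| = 2%N) ->
  (forall v, psi v \in lines F) ->
  (forall e, e \in E -> forall u v, u \in e -> v \in e ->
      f e \in psi u :&: psi v) ->
  let q := (p ^ k)%N in
  let n := (q ^ 2 + q + 1)%N in
  let RF : R := (\sum_(x in points F)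
                   #|\bigcup_(e in [set e in E | f e == x]) e|)%:R / #|V|%:R in
  [/\ RF <= (q + 1)%:R,
      Num.sqrt (n%:R : R) <= (q + 1)%:R,
      (q + 1)%:R <= Num.sqrt (n%:R : R) + 1
    & RF <= Num.sqrt (n%:R : R) + 1].
Proof.
move=> _ _ card_F _ psi_line f_edge q n RF.
have f_incident e : e \in E -> forall v, v \in e -> f e \in psi v.
  by move=> eE v ve; have := f_edge e eE v v ve ve; rewrite setIid.
have RF_le : RF <= (q + 1)%:R.
  rewrite /RF /q addn1 -card_F; apply: ler_natr_div; rewrite -sum_nat_const.
  apply: leq_trans (sum_card_class_vertices f_incident _) _.
  by apply: leq_sum => v _; apply: card_line.
have sqrt_le : Num.sqrt (n%:R : R) <= (q + 1)%:R.
  by apply: ler_sqrtr_nat; rewrite /n; nia.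
have le_sqrt : (q + 1)%:R <= Num.sqrt (n%:R : R) + 1.
  by rewrite natrD lerD2r; apply: ler_nat_sqrtr; rewrite /n; nia.
by split => //; apply: le_trans RF_le le_sqrt.
Qed.
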